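(* The functor sending a sesquiad $A$ to the pair $(A,R_A)$ (with $A$ identified with its image in $R_A$) is an equivalence of categories from the category of sesquiads to the category of monoidal pairs. An inverse is given by sending a monoidal pair $(A,R)$ to the monoid $A$ equipped with the addition defined by the inclusion $A\subset R$.
   Context: All rings are commutative with $1$; monoids are commutative with $1$ and a zero element. A sesquiad is a monoid $A$ with an addition: partially defined sums $\sum_jk_ja_j$ ($k\in\mathbb Z^n$, $n\ge 2$) which come from an injective monoid morphism $\varphi:A\to R$ into a ring with $\varphi(0)=0$, such a sum being defined exactly when $\sum_jk_j\varphi(a_j)\in\varphi(A)$ and then equal to its preimage. Sesquiad morphisms are monoid morphisms preserving defined sums. $R_A=\mathbb ZA/I(A)$ is the universal ring ($I(A)$ generated by the relations expressing the defined sums). A monoidal pair is a pair $(A,R)$ of a ring $R$ and a multiplicative submonoid $A\subset R$ containing $0$ which generates $R$ as a ring; a morphism $(A,R)\to(B,S)$ is a ring homomorphism $R\to S$ mapping $A$ into $B$. *)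

From HB Require Import structures.
From mathcomp Require Import all_boot all_order all_algebra.
From Stdlib Require Import ProofIrrelevance.
Set Implicit Arguments. Unset Strict Implicit. Unset Printing Implicit Defensive.
Import GRing.Theory.
Local Open Scope ring_scope.

(* A formal sum  sum_j k_j a_j  is represented by the sequence [:: (k_1,a_1); ...; (k_n,a_n)],
   k_j : int.  Its value under phi : A -> R is  \sum_j phi(a_j) *~ k_j. *)
Definition fsum (T : Type) (R : comPzRingType) (phi : T -> R) (s : seq (int * T)) : R :=
  \sum_(p <- s) phi p.2 *~ p.1.

(* Sesquiad: commutative monoid with 1 and 0, together with partially defined sums
   (ssum s b  means "the sum s (of length n >= 2) is defined and equals b") which come
   from some injective monoid morphism phi into a (commutative) ring with phi 0 = 0. *)
Record sesquiad := Sesquiad {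
  scar :> Type;
  smul : scar -> scar -> scar;
  sone : scar;
  szero : scar;
  smulA : forall a b c, smul a (smul b c) = smul (smul a b) c;
  smulC : forall a b, smul a b = smul b a;
  smul1 : forall a, smul sone a = a;
  smul0 : forall a, smul szero a = szero;
  ssum : seq (int * scar) -> scar -> Prop;
  ssum_repr : exists (R : comPzRingType) (phi : scar -> R),
    [/\ injective phi,
        (forall a b, phi (smul a b) = phi a * phi b),
        phi sone = 1,
        phi szero = 0 &
        forall s b, ssum s b <-> ((1 < size s)%N /\ fsum phi s = phi b)]
}.

Definition sesq_morph (A B : sesquiad) (f : A -> B) : Prop :=
  [/\ (forall a b, f (smul a b) = smul (f a) (f b)),
      f (sone A) = sone B,
      f (szero A) = szero B &
      forall s b, ssum s b -> ssum [seq (p.1, f p.2) | p <- s] (f b)].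

(* Maps A -> S that kill the relations defining I(A) in ZA (i.e. that factor through R_A). *)
Definition sesq_ring_map (A : sesquiad) (S : comPzRingType) (g : A -> S) : Prop :=
  [/\ (forall a b, g (smul a b) = g a * g b),
      g (sone A) = 1 &
      forall s b, ssum s b -> g b = fsum g s].

(* (R, iota) is the universal ring R_A = ZA / I(A) of A (characterised by its
   universal property, i.e. presentation by generators and relations). *)
Definition universal_ring (A : sesquiad) (R : comPzRingType) (iota : A -> R) : Prop :=
  sesq_ring_map iota /\
  forall (S : comPzRingType) (g : A -> S), sesq_ring_map g ->
    exists h : {rmorphism R -> S},
      (forall a, h (iota a) = g a) /\
      forall h' : {rmorphism R -> S}, (forall a, h' (iota a) = g a) -> h' =1 h.

Definition ring_generates (R : comPzRingType) (P : R -> Prop) : Prop :=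
  forall S : R -> Prop,
    S 1 -> (forall x y, S x -> S y -> S (x - y)) -> (forall x y, S x -> S y -> S (x * y)) ->
    (forall x, P x -> S x) -> forall x, S x.

Definition monoidal_pair (R : comPzRingType) (P : R -> Prop) : Prop :=
  [/\ P 0, P 1, (forall x y, P x -> P y -> P (x * y)) & ring_generates P].

Definition mpair_morph (R S : comPzRingType) (P : R -> Prop) (Q : S -> Prop)
  (h : {rmorphism R -> S}) : Prop := forall x, P x -> Q (h x).

Section Induced.
Variables (R : comPzRingType) (P : R -> Prop) (HP : monoidal_pair P).

Let PT := {x : R | P x}.

Lemma ind_eq (x y : PT) : proj1_sig x = proj1_sig y -> x = y.
Proof.
case: x => x Px; case: y => y Py /= E; subst y; by rewrite (proof_irrelevance _ Px Py).
Qed.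

Let P0 : P 0. Proof. by case: HP. Qed.
Let P1 : P 1. Proof. by case: HP. Qed.
Let PM x y : P x -> P y -> P (x * y). Proof. by case: HP => _ _ H _; apply: H. Qed.

Definition ind_mul (x y : PT) : PT :=
  exist _ (proj1_sig x * proj1_sig y) (PM (proj2_sig x) (proj2_sig y)).
Definition ind_one : PT := exist _ 1 P1.
Definition ind_zero : PT := exist _ 0 P0.
Definition ind_sum (s : seq (int * PT)) (b : PT) : Prop :=
  (1 < size s)%N /\ fsum (fun x : PT => proj1_sig x) s = proj1_sig b.

Lemma ind_repr : exists (R' : comPzRingType) (phi : PT -> R'),
    [/\ injective phi,
        (forall a b, phi (ind_mul a b) = phi a * phi b),
        phi ind_one = 1,
        phi ind_zero = 0 &
        forall s b, ind_sum s b <-> ((1 < size s)%N /\ fsum phi s = phi b)].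
Proof.
exists R, (fun x : PT => proj1_sig x); split => //.
by move=> x y; apply: ind_eq.
Qed.

Lemma ind_mulA (a b c : PT) : ind_mul a (ind_mul b c) = ind_mul (ind_mul a b) c.
Proof. by apply: ind_eq; rewrite /= mulrA. Qed.
Lemma ind_mulC (a b : PT) : ind_mul a b = ind_mul b a.
Proof. by apply: ind_eq; rewrite /= mulrC. Qed.
Lemma ind_mul1 (a : PT) : ind_mul ind_one a = a.
Proof. by apply: ind_eq; rewrite /= mul1r. Qed.
Lemma ind_mul0 (a : PT) : ind_mul ind_zero a = ind_zero.
Proof. by apply: ind_eq; rewrite /= mul0r. Qed.

Definition induced_sesquiad : sesquiad :=
  @Sesquiad PT ind_mul ind_one ind_zero ind_mulA ind_mulC ind_mul1 ind_mul0
    ind_sum ind_repr.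
End Induced.

From HB Require Import structures.
From mathcomp Require Import all_boot all_order all_algebra.
From mathcomp Require Import boolp.
Set Implicit Arguments. Unset Strict Implicit. Unset Printing Implicit Defensive.
Import GRing.Theory.
Local Open Scope ring_scope.
Local Open Scope quotient_scope.

(* R_A is the ring of formal Z-linear combinations of elements of A, two of them
   being identified when they agree under every multiplicative unital map into a
   ring that respects the defined sums.  Comparing with an injective representation
   A -> R of the sesquiad shows that A -> R_A is injective and that a sum is defined
   in A exactly when it holds in R_A; so a ring map R_A -> R_B sending A into B
   restricts to a sesquiad morphism.  Conversely, for a monoidal pair (P, R) every
   element of R is a formal sum over P, and a map on P respecting the sums induced
   by R is well defined on formal sums: two formal sums with the same value in R
   differ by a defined sum whose value is 0. *)

Section FormalSums.
Variable T : Type.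

Definition fsopp (s : seq (int * T)) := [seq (- p.1, p.2) | p <- s].
Definition fsmul (m : T -> T -> T) (s t : seq (int * T)) :=
  [seq (p.1 * q.1, m p.2 q.2) | p <- s, q <- t].

Variable R : comPzRingType.
Implicit Types (phi psi : T -> R) (s t : seq (int * T)).

Lemma fsum0 phi : fsum phi [::] = 0.
Proof. by rewrite /fsum big_nil. Qed.

Lemma fsum_seq1 phi k a : fsum phi [:: (k, a)] = phi a *~ k.
Proof. by rewrite /fsum big_seq1. Qed.

Lemma fsum_cat phi s t : fsum phi (s ++ t) = fsum phi s + fsum phi t.
Proof. by rewrite /fsum big_cat. Qed.

Lemma fsumN phi s : fsum phi (fsopp s) = - fsum phi s.
Proof. by rewrite /fsum big_map -sumrN; apply: eq_bigr => p _; rewrite mulrNz. Qed.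

Lemma fsumM phi m s t : (forall a b, phi (m a b) = phi a * phi b) ->
  fsum phi (fsmul m s t) = fsum phi s * fsum phi t.
Proof.
move=> phiM; rewrite /fsum /fsmul big_allpairs_dep mulr_suml.
apply: eq_bigr => p _; rewrite mulr_sumr; apply: eq_bigr => q _ /=.
by rewrite phiM mulrzAl mulrzAr -mulrzA mulrC [(q.1 * _)%R]mulrC.
Qed.

Lemma eq_fsum phi psi s : phi =1 psi -> fsum phi s = fsum psi s.
Proof. by move=> E; apply: eq_bigr => p _; rewrite E. Qed.

Lemma rmorph_fsum (S : comPzRingType) (h : {rmorphism R -> S}) phi s :
  h (fsum phi s) = fsum (h \o phi) s.
Proof. by rewrite /fsum rmorph_sum; apply: eq_bigr => p _; rewrite rmorphMz. Qed.

Lemma fsum_map (U : Type) (psi : U -> R) (f : T -> U) s :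
  fsum psi [seq (p.1, f p.2) | p <- s] = fsum (psi \o f) s.
Proof. by rewrite /fsum big_map. Qed.

Lemma fsum_closed (S : R -> Prop) phi :
  S 0 -> (forall x y, S x -> S y -> S (x - y)) -> (forall a, S (phi a)) ->
  forall s, S (fsum phi s).
Proof.
move=> S0 SB Sphi; have SN x : S x -> S (- x) by move=> Sx; rewrite -sub0r; apply: SB.
have SD x y : S x -> S y -> S (x + y) by move=> Sx Sy; rewrite -[y]opprK; apply/SB/SN.
have SMn x n : S x -> S (x *+ n) by move=> Sx; elim: n => [|n IH]; rewrite ?mulrS; auto.
have SMz x k : S x -> S (x *~ k).
  by case: k => n Sx; [exact: SMn | rewrite NegzE mulrNz; exact/SN/SMn].
elim=> [|p s IH]; first by rewrite fsum0.
by rewrite /fsum big_cons; apply: SD => //; apply: SMz.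
Qed.

End FormalSums.

Section RingMaps.
Variable A : sesquiad.

Lemma sesq_ring_repr : exists (R : comPzRingType) (phi : A -> R),
  [/\ injective phi, sesq_ring_map phi, phi (szero A) = 0 &
      forall s b, ssum s b <-> ((1 < size s)%N /\ fsum phi s = phi b)].
Proof.
have [R [phi [phi_inj phiM phi1 phi0 phiS]]] := ssum_repr A.
by exists R, phi; split=> //; split=> // s b /phiS[_ ->].
Qed.

Lemma ssum_szero : ssum [:: (1%Z, szero A); (1%Z, szero A)] (szero A).
Proof.
have [R [phi [_ _ phi0 phiS]]] := sesq_ring_repr.
by apply/phiS; split=> //; rewrite /fsum !big_cons big_nil phi0 !mulr1z !addr0.
Qed.

Variables (S : comPzRingType) (g : A -> S).
Hypothesis g_map : sesq_ring_map g.

Lemma sesq_ring_map0 : g (szero A) = 0.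
Proof.
have [_ _ gS] := g_map; move: (gS _ _ ssum_szero).
rewrite /fsum !big_cons big_nil !mulr1z addr0 => E.
by apply: (@addrI _ (g (szero A))); rewrite addr0 -E.
Qed.

(* Padded with 0 + 0, the relation s - t = 0 becomes a defined sum of length at least 2. *)
Lemma sesq_ring_map_fsum_eq (R : comPzRingType) (phi : A -> R) :
    phi (szero A) = 0 ->
    (forall s b, (1 < size s)%N -> fsum phi s = phi b -> ssum s b) ->
  forall s t, fsum phi s = fsum phi t -> fsum g s = fsum g t.
Proof.
move=> phi0 phiS s t Est; have [_ _ gS] := g_map.
set zz := [:: (1%Z, szero A); (1%Z, szero A)].
have fsum_zz (psi : A -> _) : psi (szero A) = 0 -> fsum psi zz = 0.
  by move=> psi0; rewrite /fsum !big_cons big_nil psi0 !mul0rz !addr0.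
have /gS : ssum (s ++ fsopp t ++ zz) (szero A).
  apply: phiS; first by rewrite !size_cat /= !addnS.
  by rewrite !fsum_cat fsumN Est fsum_zz // addNKr.
rewrite !fsum_cat fsumN fsum_zz ?sesq_ring_map0 // addr0 => /esym/eqP.
by rewrite subr_eq0 => /eqP.
Qed.

End RingMaps.

Section UniversalRing.
Variable A : sesquiad.

Definition fsums := seq (int * A).
HB.instance Definition _ := gen_eqMixin fsums.
HB.instance Definition _ := gen_choiceMixin fsums.

Definition sesq_equiv (s t : fsums) : Prop :=
  forall (S : comPzRingType) (g : A -> S), sesq_ring_map g -> fsum g s = fsum g t.
Definition sesq_equivb s t := `[< sesq_equiv s t >].

Lemma sesq_equivb_refl : reflexive sesq_equivb.
Proof. by move=> s; apply/asboolP. Qed.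
Lemma sesq_equivb_sym : symmetric sesq_equivb.
Proof. by move=> s t; apply/asboolP/asboolP => E S g g_map; rewrite E. Qed.
Lemma sesq_equivb_trans : transitive sesq_equivb.
Proof.
by move=> t s u /asboolP Est /asboolP Etu; apply/asboolP => S g g_map; rewrite Est ?Etu.
Qed.
Canonical sesq_equiv_rel :=
  EquivRel sesq_equivb sesq_equivb_refl sesq_equivb_sym sesq_equivb_trans.

Definition univ_quot := {eq_quot sesq_equivb}.
HB.instance Definition _ := Choice.on univ_quot.
HB.instance Definition _ := EqQuotient.on univ_quot.

Definition quot_eval (S : comPzRingType) (g : A -> S) (q : univ_quot) := fsum g (repr q).

Lemma quot_evalE (S : comPzRingType) (g : A -> S) s :
  sesq_ring_map g -> quot_eval g (\pi_univ_quot s) = fsum g s.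
Proof.
have : sesq_equiv (repr (\pi_univ_quot s)) s.
  by apply/asboolP/(@eqquotP _ _ univ_quot); rewrite reprK.
by move=> E g_map; apply: E.
Qed.

Lemma quot_eval_inj q1 q2 :
  (forall S g, sesq_ring_map g -> @quot_eval S g q1 = quot_eval g q2) -> q1 = q2.
Proof. by move=> E; rewrite -(reprK q1) -(reprK q2); apply/eqquotP/asboolP. Qed.

Implicit Types q : univ_quot.

Definition quot_add q1 q2 := \pi_univ_quot (repr q1 ++ repr q2).
Definition quot_opp q := \pi_univ_quot (fsopp (repr q)).
Definition quot_zero := \pi_univ_quot [::].
Definition quot_mul q1 q2 := \pi_univ_quot (fsmul (@smul A) (repr q1) (repr q2)).
Definition quot_one := \pi_univ_quot [:: (1%Z, sone A)].

Section Evaluation.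
Variables (S : comPzRingType) (g : A -> S).
Hypothesis g_map : sesq_ring_map g.

Lemma quot_eval_add q1 q2 : quot_eval g (quot_add q1 q2) = quot_eval g q1 + quot_eval g q2.
Proof. by rewrite quot_evalE // fsum_cat. Qed.
Lemma quot_eval_opp q : quot_eval g (quot_opp q) = - quot_eval g q.
Proof. by rewrite quot_evalE // fsumN. Qed.
Lemma quot_eval_zero : quot_eval g quot_zero = 0.
Proof. by rewrite quot_evalE // fsum0. Qed.
Lemma quot_eval_mul q1 q2 : quot_eval g (quot_mul q1 q2) = quot_eval g q1 * quot_eval g q2.
Proof. by have [gM _ _] := g_map; rewrite quot_evalE // fsumM. Qed.
Lemma quot_eval_one : quot_eval g quot_one = 1.
Proof. by have [_ g1 _] := g_map; rewrite quot_evalE // fsum_seq1 g1. Qed.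
End Evaluation.

Local Ltac by_eval := apply: quot_eval_inj; let g_map := fresh in move=> ? ? g_map;
  rewrite ?(quot_eval_add g_map, quot_eval_opp g_map, quot_eval_zero g_map,
            quot_eval_mul g_map, quot_eval_one g_map).

Lemma quot_addA : associative quot_add. Proof. by move=> *; by_eval; rewrite addrA. Qed.
Lemma quot_addC : commutative quot_add. Proof. by move=> *; by_eval; rewrite addrC. Qed.
Lemma quot_add0 : left_id quot_zero quot_add. Proof. by move=> *; by_eval; rewrite add0r. Qed.
Lemma quot_addN : left_inverse quot_zero quot_opp quot_add.
Proof. by move=> *; by_eval; rewrite addNr. Qed.
HB.instance Definition _ :=
  GRing.isZmodule.Build univ_quot quot_addA quot_addC quot_add0 quot_addN.

Lemma quot_mulA : associative quot_mul. Proof. by move=> *; by_eval; rewrite mulrA. Qed.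
Lemma quot_mulC : commutative quot_mul. Proof. by move=> *; by_eval; rewrite mulrC. Qed.
Lemma quot_mul1 : left_id quot_one quot_mul. Proof. by move=> *; by_eval; rewrite mul1r. Qed.
Lemma quot_mulDl : left_distributive quot_mul +%R.
Proof. by move=> *; by_eval; rewrite mulrDl. Qed.
HB.instance Definition _ :=
  GRing.Zmodule_isComPzRing.Build univ_quot quot_mulA quot_mulC quot_mul1 quot_mulDl.

Definition quot_iota (a : A) := \pi_univ_quot [:: (1%Z, a)].

(* The unused argument lets the canonical rmorphism instance below depend on g_map. *)
Definition quot_evalr (S : comPzRingType) (g : A -> S) of sesq_ring_map g := quot_eval g.

Section EvaluationMorphism.
Variables (S : comPzRingType) (g : A -> S) (g_map : sesq_ring_map g).

Lemma quot_evalr_zmod : zmod_morphism (quot_evalr g_map).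
Proof. by move=> q1 q2; rewrite /quot_evalr quot_eval_add // quot_eval_opp. Qed.
Lemma quot_evalr_monoid : monoid_morphism (quot_evalr g_map).
Proof. by split=> [|q1 q2]; [exact: quot_eval_one | exact: quot_eval_mul]. Qed.
HB.instance Definition _ :=
  GRing.isZmodMorphism.Build univ_quot S (quot_evalr g_map) quot_evalr_zmod.
HB.instance Definition _ :=
  GRing.isMonoidMorphism.Build univ_quot S (quot_evalr g_map) quot_evalr_monoid.

Lemma quot_evalr_iota a : quot_evalr g_map (quot_iota a) = g a.
Proof. by rewrite /quot_evalr quot_evalE // fsum_seq1. Qed.

Lemma quot_evalr_fsum s : quot_evalr g_map (fsum quot_iota s) = fsum g s.
Proof. by rewrite rmorph_fsum; apply: eq_fsum => a /=; rewrite quot_evalr_iota. Qed.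
End EvaluationMorphism.

Lemma quot_fsum_repr q : q = fsum quot_iota (repr q).
Proof. by apply: quot_eval_inj => S g g_map; exact/esym/(quot_evalr_fsum g_map). Qed.

Lemma quot_iota_ring_map : sesq_ring_map quot_iota.
Proof.
split=> [a b|| s b sb]; apply: quot_eval_inj => S g g_map.
- by have [gM _ _] := g_map; rewrite quot_eval_mul // !quot_evalE // !fsum_seq1 gM.
- by rewrite quot_eval_one.
- have [_ _ gS] := g_map.
  rewrite quot_evalE // fsum_seq1 mulr1z (gS _ _ sb).
  exact/esym/(quot_evalr_fsum g_map).
Qed.

Lemma quot_iota_universal : universal_ring quot_iota.
Proof.
split=> [|S g g_map]; first exact: quot_iota_ring_map.
exists (quot_evalr g_map); split=> [|h h_iota q]; first exact: quot_evalr_iota.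
rewrite (quot_fsum_repr q) rmorph_fsum.
transitivity (fsum g (repr q)); first by apply: eq_fsum => a /=; rewrite h_iota.
exact/esym/quot_evalr_fsum.
Qed.

End UniversalRing.

Section UniversalRingProperties.
Variables (A : sesquiad) (R : comPzRingType) (iota : A -> R).
Hypothesis iota_univ : universal_ring iota.

(* R is a retract of the ring of formal sums: k \o h = id by uniqueness of factorization. *)
Lemma univ_fsum x : exists s, x = fsum iota s.
Proof.
have [iota_map iota_fact] := iota_univ.
have [h [h_iota _]] := iota_fact _ _ (quot_iota_ring_map A).
have [h0 [_ h0_uniq]] := iota_fact _ _ iota_map.
pose k : {rmorphism univ_quot A -> R} := quot_evalr iota_map.
have kh_iota a : (k \o h) (iota a) = iota a by rewrite /= h_iota quot_evalr_iota.
exists (repr (h x)).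
rewrite -(quot_evalr_fsum iota_map) -quot_fsum_repr.
by rewrite -[LHS]/(idfun x) (h0_uniq idfun) // -(h0_uniq (k \o h)).
Qed.

Lemma univ_inj : injective iota.
Proof.
have [S [phi [phi_inj phi_map _ _]]] := sesq_ring_repr A.
have [h [h_iota _]] := iota_univ.2 _ _ phi_map.
by move=> a b E; apply: phi_inj; rewrite -!h_iota E.
Qed.

Lemma univ_ssumE s b : ssum s b <-> ((1 < size s)%N /\ fsum iota s = iota b).
Proof.
have [S [phi [_ phi_map _ phiS]]] := sesq_ring_repr A.
have [[_ _ iotaS] _] := iota_univ.
have [h [h_iota _]] := iota_univ.2 _ _ phi_map.
split=> [sb | [size_s E]]; last first.
  apply/phiS; split=> //; rewrite -h_iota -E rmorph_fsum.
  by apply: eq_fsum => a; rewrite /= h_iota.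
by split; [have /phiS[] := sb | rewrite (iotaS _ _ sb)].
Qed.

Lemma univ_mpair : monoidal_pair (fun x : R => exists a, x = iota a).
Proof.
have [[iotaM iota1 _] _] := iota_univ.
split=> [||x y [a ->] [b ->]|S S1 SB _ S_iota x].
- by exists (szero A); rewrite (sesq_ring_map0 iota_univ.1).
- by exists (sone A); rewrite iota1.
- by exists (smul a b); rewrite iotaM.
- have [s ->] := univ_fsum x.
  apply: fsum_closed => // [|a]; first by rewrite -(subrr 1); apply: SB.
  by apply: S_iota; exists a.
Qed.

End UniversalRingProperties.

Section InducedSesquiad.
Variables (R : comPzRingType) (P : R -> Prop) (HP : monoidal_pair P).
Local Notation PS := (induced_sesquiad HP).
Local Notation incl := (fun x : PS => proj1_sig x).

Lemma induced_ring_map : sesq_ring_map incl.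
Proof. by split=> // s b [_ ->]. Qed.

Lemma induced_fsum x : exists s : seq (int * PS), x = fsum incl s.
Proof.
have [_ _ _ P_gen] := HP.
apply: (P_gen (fun x => exists s : seq (int * PS), x = fsum incl s)).
- by exists [:: (1%Z, ind_one HP : PS)]; rewrite fsum_seq1.
- by move=> _ _ [s ->] [t ->]; exists (s ++ fsopp t); rewrite fsum_cat fsumN.
- by move=> _ _ [s ->] [t ->]; exists (fsmul (@ind_mul R P HP) s t); rewrite fsumM.
- by move=> y Py; exists [:: (1%Z, exist P y Py : PS)]; rewrite fsum_seq1.
Qed.

Definition induced_coords : R -> seq (int * PS) := projT1 (choice induced_fsum).

Lemma induced_coordsK x : fsum incl (induced_coords x) = x.
Proof.
by rewrite /induced_coords; case: (choice induced_fsum) => f /= f_spec; rewrite -f_spec.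
Qed.

Definition induced_extend (S : comPzRingType) (g : PS -> S) of sesq_ring_map g :=
  fun x => fsum g (induced_coords x).

Section Extension.
Variables (S : comPzRingType) (g : PS -> S) (g_map : sesq_ring_map g).

Lemma induced_extend_fsum s : induced_extend g_map (fsum incl s) = fsum g s.
Proof.
by apply: (sesq_ring_map_fsum_eq g_map (phi := incl)) => //; exact: induced_coordsK.
Qed.

Lemma induced_extend_zmod : zmod_morphism (induced_extend g_map).
Proof.
move=> x y; have [s ->] := induced_fsum x; have [t ->] := induced_fsum y.
by rewrite -fsumN -fsum_cat !induced_extend_fsum fsum_cat fsumN.
Qed.

Lemma induced_extend_monoid : monoid_morphism (induced_extend g_map).
Proof.
have [gM g1 _] := g_map; split=> [|x y].
  by rewrite -[1](fsum_seq1 incl 1 (ind_one HP)) induced_extend_fsum fsum_seq1 g1.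
have [s ->] := induced_fsum x; have [t ->] := induced_fsum y.
by rewrite -(@fsumM _ _ incl (@ind_mul R P HP)) // !induced_extend_fsum fsumM.
Qed.

HB.instance Definition _ :=
  GRing.isZmodMorphism.Build R S (induced_extend g_map) induced_extend_zmod.
HB.instance Definition _ :=
  GRing.isMonoidMorphism.Build R S (induced_extend g_map) induced_extend_monoid.
End Extension.

Lemma induced_universal : universal_ring incl.
Proof.
split=> [|S g g_map]; first exact: induced_ring_map.
exists (induced_extend g_map); split=> [a|h h_incl x].
  by have := induced_extend_fsum g_map [:: (1%Z, a)]; rewrite !fsum_seq1 !mulr1z.
have [s ->] := induced_fsum x; rewrite rmorph_fsum.
transitivity (fsum g s); first exact: eq_fsum.
exact/esym/induced_extend_fsum.
Qed.

End InducedSesquiad.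

Lemma univ_ring_morph (A B : sesquiad) (RA RB : comPzRingType)
    (iA : A -> RA) (iB : B -> RB) (f : A -> B) :
    universal_ring iA -> universal_ring iB -> sesq_morph f ->
  exists h : {rmorphism RA -> RB},
    (forall a, h (iA a) = iB (f a)) /\
    forall h' : {rmorphism RA -> RB}, (forall a, h' (iA a) = iB (f a)) -> h' =1 h.
Proof.
move=> [_ iA_fact] [[iBM iB1 iBS] _] [fM f1 _ fS].
apply: iA_fact; split=> [a b|| s b sb]; rewrite /= ?fM ?iBM ?f1 //.
by rewrite (iBS _ _ (fS _ _ sb)) fsum_map.
Qed.

Lemma mpair_morph_sesq_morph (A B : sesquiad) (RA RB : comPzRingType)
    (iA : A -> RA) (iB : B -> RB) (h : {rmorphism RA -> RB}) :
    universal_ring iA -> universal_ring iB ->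
    mpair_morph (fun x => exists a, x = iA a) (fun y => exists b, y = iB b) h ->
  exists f : A -> B,
    [/\ sesq_morph f, (forall a, h (iA a) = iB (f a)) &
        forall f' : A -> B, (forall a, h (iA a) = iB (f' a)) -> f' =1 f].
Proof.
move=> univA univB h_mpair.
have h_iA a : exists b, h (iA a) = iB b.
  by have [b ->] := h_mpair _ (ex_intro _ a erefl); exists b.
have [f hf] := choice h_iA.
have [[iAM iA1 _] _] := univA; have [[iBM iB1 _] _] := univB.
have iB_inj := univ_inj univB.
exists f; split=> [|//|f' hf' a]; last by apply: iB_inj; rewrite -hf hf'.
split=> [a b|||s b].
- by apply: iB_inj; rewrite -hf iAM rmorphM iBM !hf.
- by apply: iB_inj; rewrite -hf iA1 rmorph1 iB1.
- by apply: iB_inj; rewrite -hf !(sesq_ring_map0 univA.1, sesq_ring_map0 univB.1) rmorph0.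
- move=> /(univ_ssumE univA) [size_s E]; apply/(univ_ssumE univB).
  split; first by rewrite size_map.
  by rewrite fsum_map -hf -E rmorph_fsum; apply: eq_fsum => a /=; rewrite hf.
Qed.

Lemma induced_sesq_morph (R S : comPzRingType) (P : R -> Prop) (Q : S -> Prop)
    (HP : monoidal_pair P) (HQ : monoidal_pair Q) (h : {rmorphism R -> S}) :
    mpair_morph P Q h ->
  exists f : induced_sesquiad HP -> induced_sesquiad HQ,
    sesq_morph f /\ forall x, proj1_sig (f x) = h (proj1_sig x).
Proof.
move=> hPQ; exists (fun x => exist Q (h (proj1_sig x)) (hPQ _ (proj2_sig x))).
split=> //; split=> [a b|||s b [size_s E]]; try apply: ind_eq.
- exact: rmorphM.
- exact: rmorph1.
- exact: rmorph0.
- split; first by rewrite size_map.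
  by rewrite /= -E rmorph_fsum /fsum big_map.
Qed.

Theorem mainTheorem5 :
  (forall A : sesquiad, exists (R : comPzRingType) (iota : A -> R), universal_ring iota)
  /\
  (forall (A : sesquiad) (R : comPzRingType) (iota : A -> R), universal_ring iota ->
     [/\ injective iota,
         monoidal_pair (fun x : R => exists a, x = iota a) &
         forall s b, ssum s b <-> ((1 < size s)%N /\ fsum iota s = iota b)])
  /\
  (forall (A B : sesquiad) (RA RB : comPzRingType) (iA : A -> RA) (iB : B -> RB),
     universal_ring iA -> universal_ring iB ->
     forall f : A -> B, sesq_morph f ->
       exists h : {rmorphism RA -> RB},
         (forall a, h (iA a) = iB (f a)) /\
         forall h' : {rmorphism RA -> RB}, (forall a, h' (iA a) = iB (f a)) -> h' =1 h)
  /\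
  (forall (A B : sesquiad) (RA RB : comPzRingType) (iA : A -> RA) (iB : B -> RB),
     universal_ring iA -> universal_ring iB ->
     forall h : {rmorphism RA -> RB},
       mpair_morph (fun x : RA => exists a, x = iA a) (fun y : RB => exists b, y = iB b) h ->
       exists f : A -> B,
         [/\ sesq_morph f,
             (forall a, h (iA a) = iB (f a)) &
             forall f' : A -> B, (forall a, h (iA a) = iB (f' a)) -> f' =1 f])
  /\
  (forall (R S : comPzRingType) (P : R -> Prop) (Q : S -> Prop)
          (HP : monoidal_pair P) (HQ : monoidal_pair Q) (h : {rmorphism R -> S}),
     mpair_morph P Q h ->
     exists f : induced_sesquiad HP -> induced_sesquiad HQ,
       sesq_morph f /\ forall x, proj1_sig (f x) = h (proj1_sig x))
  /\
  (forall (R : comPzRingType) (P : R -> Prop) (HP : monoidal_pair P),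
     universal_ring (fun x : induced_sesquiad HP => proj1_sig x)).
Proof.
split; first by move=> A; exists (univ_quot A), (@quot_iota A); exact: quot_iota_universal.
split.
  by move=> A R iota univ; split; [exact: univ_inj | exact: univ_mpair | exact: univ_ssumE].
split; first by move=> A B RA RB iA iB univA univB f; exact: univ_ring_morph.
split; first by move=> A B RA RB iA iB univA univB h; exact: mpair_morph_sesq_morph.
split; first by move=> R S P Q HP HQ h; exact: induced_sesq_morph.
exact: induced_universal.
Qed.
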